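(* Let $k\ge 1$ be an integer, let $(x_{i+1/2})_{i\in\mathbb{Z}}$ be an arbitrary mesh and let $(\bar v_i)_{i\in\mathbb{Z}}$ be an arbitrary real sequence. Let $v^\pm_{i+1/2}$ be the cell interface values of the $k$th order ENO reconstruction of $(\bar v_i)$. Then for every $i\in\mathbb{Z}$: if $\bar v_{i+1}-\bar v_i>0$ then $v^+_{i+1/2}-v^-_{i+1/2}\ge 0$; if $\bar v_{i+1}-\bar v_i<0$ then $v^+_{i+1/2}-v^-_{i+1/2}\le 0$; and if $\bar v_{i+1}-\bar v_i=0$ then $v^+_{i+1/2}-v^-_{i+1/2}=0$.
   Context: Mesh: a strictly increasing sequence $(x_{i+1/2})_{i\in\mathbb{Z}}$ of reals with $x_{i+1/2}\to\pm\infty$ as $i\to\pm\infty$; cells $I_i=[x_{i-1/2},x_{i+1/2})$ with lengths $\Delta x_i=x_{i+1/2}-x_{i-1/2}$. Given a real sequence $(\bar v_i)_{i\in\mathbb{Z}}$ (interpreted as cell averages), the divided differences are defined by $[\bar v_i]=\bar v_i$ and, for $i<j$, $[\bar v_i,\dots,\bar v_j]=\frac{[\bar v_{i+1},\dots,\bar v_j]-[\bar v_i,\dots,\bar v_{j-1}]}{x_{j+1/2}-x_{i-1/2}}$. The $k$th order ENO reconstruction: for each $i$, set $s_i^1=i$, and for $\ell=1,\dots,k-1$ set $s_i^{\ell+1}=s_i^\ell-1$ if $\bigl|[\bar v_{s_i^\ell-1},\dots,\bar v_{s_i^\ell+\ell-1}]\bigr|<\bigl|[\bar v_{s_i^\ell},\dots,\bar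 v_{s_i^\ell+\ell}]\bigr|$, and $s_i^{\ell+1}=s_i^\ell$ otherwise; put $s_i=s_i^k\in\{i-k+1,\dots,i\}$. Then $p_i$ is the unique polynomial of degree at most $k-1$ with $\frac{1}{\Delta x_j}\int_{I_j}p_i(x)\,dx=\bar v_j$ for $j=s_i,\dots,s_i+k-1$. The cell interface values are $v^-_{i+1/2}=p_i(x_{i+1/2})$ and $v^+_{i+1/2}=p_{i+1}(x_{i+1/2})$. *)

(* The mesh values x_{i+1/2} are encoded as xh i, so that
   cell I_i = [xh (i-1), xh i) and Delta x_i = xh i - xh (i-1). *)
From HB Require Import structures.
From mathcomp Require Import all_boot all_order all_algebra.
Set Implicit Arguments. Unset Strict Implicit. Unset Printing Implicit Defensive.
Import Order.TTheory GRing.Theory Num.Theory.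
Local Open Scope ring_scope.

Section ENO.
Variable R : realFieldType.

Definition is_mesh (xh : int -> R) : Prop :=
  (forall i : int, xh i < xh (i + 1)) /\
  (forall M : R, exists N : int, forall i : int, N <= i -> M < xh i) /\
  (forall M : R, exists N : int, forall i : int, i <= N -> xh i < M).

Definition cell_len (xh : int -> R) (i : int) : R := xh i - xh (i - 1).

Definition prim (p : {poly R}) : {poly R} :=
  \poly_(j < (size p).+1) (if j is j'.+1 then p`_j' / j%:R else 0).

Definition pint (p : {poly R}) (a b : R) : R := (prim p).[b] - (prim p).[a].

Definition cell_avg (xh : int -> R) (p : {poly R}) (j : int) : R :=
  pint p (xh (j - 1)) (xh j) / cell_len xh j.

(* dd xh v n i = [v_i, ..., v_{i+n}]  (divided differences) *)
Fixpoint dd (xh : int -> R) (v : int -> R) (n : nat) (i : int) : R :=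
  match n with
  | 0 => v i
  | n'.+1 => (dd xh v n' (i + 1) - dd xh v n' i) / (xh (i + Posz n'.+1) - xh (i - 1))
  end.

(* eno_st xh v i m = s_i^{m+1}; the step from s_i^l to s_i^{l+1} uses l = m+1. *)
Fixpoint eno_st (xh : int -> R) (v : int -> R) (i : int) (m : nat) : int :=
  match m with
  | 0 => i
  | m'.+1 => let s := eno_st xh v i m' in
             if `|dd xh v m'.+1 (s - 1)| < `|dd xh v m'.+1 s| then s - 1 else s
  end.

Definition eno_stencil (k : nat) (xh : int -> R) (v : int -> R) (i : int) : int :=
  eno_st xh v i k.-1.

Definition eno_poly_spec (k : nat) (xh : int -> R) (v : int -> R) (i : int)
    (p : {poly R}) : Prop :=
  (size p <= k)%N /\
  forall j : int, eno_stencil k xh v i <= j <= eno_stencil k xh v i + Posz k - 1 ->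
    cell_avg xh p j = v j.
End ENO.

(* Let V be a primitive of the cell averages, V_j - V_(j-1) = v_j * dx_j.  A
   polynomial of degree < k with cell averages v_s, ..., v_(s+k-1) is the
   derivative of the interpolant of V at the k+1 nodes x_(s-1/2), ...,
   x_(s+k-1/2).  The interpolants of two neighbouring stencils differ by a
   multiple of the nodal polynomial of their k common nodes, the multiple
   being a positive factor times a k-th order divided difference of v, and the
   derivative of that nodal polynomial at a common node x_(i+1/2) has the sign
   (-1)^(number of common nodes right of it).  Hence v^+ - v^- telescopes over
   the stencils between s_i and s_(i+1) into a sum of signed divided
   differences.  By induction on the order, the ENO selection keeps every such
   signed divided difference of the sign of v_(i+1) - v_i: the stencil is
   always extended towards the smaller divided difference, which therefore
   cannot flip the sign of the larger one. *)
From HB Require Import structures.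
From mathcomp Require Import all_boot all_order all_algebra.
From mathcomp Require Import zify ring lra.
Import Order.TTheory GRing.Theory Num.Theory.
Local Open Scope ring_scope.

Lemma size_polyB_le (R : nzRingType) (p q : {poly R}) (n : nat) :
  (size p <= n)%N -> (size q <= n)%N -> (size (p - q)%R <= n)%N.
Proof.
by move=> hp hq; rewrite (leq_trans (size_polyD _ _)) // geq_max hp size_polyN.
Qed.

Lemma coefXsubCM (R : nzRingType) (c : R) (q : {poly R}) (j : nat) :
  (('X - c%:P) * q)`_j.+1 = q`_j - c * q`_j.+1.
Proof. by rewrite mulrBl coefB coefXM coefCM. Qed.

Lemma mulr_ge0_addr_dominated (R : realDomainType) (s a b : R) :
  0 <= s * a -> `|b| <= `|a| -> 0 <= s * (a + b).
Proof.
move=> hsa hba; rewrite mulrDr.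
have hsb : - (s * b) <= `|s| * `|a|.
  by rewrite (le_trans (ler_norm _)) // normrN normrM ler_wpM2l.
have : `|s| * `|a| = s * a by rewrite -normrM ger0_norm.
lra.
Qed.

Lemma exists_antidifference (M : zmodType) (g : int -> M) :
  exists G : int -> M, forall j, G j - G (j - 1) = g j.
Proof.
exists (fun z => match z with
  | Posz n => \sum_(t < n) g t.+1
  | Negz n => - \sum_(t < n.+1) g (- t%:Z) end).
case=> [[|n]|n].
- have -> : Posz 0 - 1 = Negz 0 by [].
  by rewrite big_ord0 big_ord1 /= sub0r opprK.
- have -> : Posz n.+1 - 1 = Posz n by lia.
  by rewrite big_ord_recr /= addrAC subrr add0r.
- have -> : Negz n - 1 = Negz n.+1 by lia.
  rewrite (big_ord_recr n.+1) /=.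
  have -> : - Posz n.+1 = Negz n by lia.
  by rewrite opprK addKr.
Qed.

Lemma telescope_ge0 (R : numDomainType) (f : int -> R) (a b : int) :
  a <= b -> (forall x, a < x <= b -> 0 <= f x - f (x - 1)) -> 0 <= f b - f a.
Proof.
move=> ab hf.
suff hn : forall n : nat, a + n <= b -> 0 <= f (a + n) - f a.
  by have := hn (absz (b - a)) ltac:(lia); have -> : a + absz (b - a) = b by lia.
elim=> [|n IH] hn; first by rewrite addr0 subrr.
have step := hf (a + n.+1) ltac:(lia).
rewrite (_ : a + n.+1 - 1 = a + n) in step; last by lia.
rewrite -[f (a + n.+1)](subrK (f (a + n))) -addrA.
by apply: addr_ge0 => //; apply: IH; lia.
Qed.

Definition altsign (R : pzRingType) (z : int) : R := (-1) ^+ absz z.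

Section AltSign.
Variable R : numDomainType.
Implicit Type z : int.

Lemma altsign0 : altsign R 0 = 1.
Proof. by rewrite /altsign expr0. Qed.

Lemma altsignS z : altsign R (z + 1) = - altsign R z.
Proof.
rewrite /altsign; case: z => [n|[|n]].
- have -> : Posz n + 1 = Posz n.+1 by lia.
  by rewrite exprS mulN1r.
- have -> : Negz 0 + 1 = 0 by lia.
  by rewrite expr0 expr1 opprK.
- have -> : Negz n.+1 + 1 = Negz n by lia.
  by rewrite [absz (Negz n.+1)]/= exprS mulN1r opprK.
Qed.

Lemma altsign_sqr z : altsign R z * altsign R z = 1.
Proof. by rewrite /altsign -exprD addnn -signr_odd odd_double. Qed.

Lemma normr_altsignM z (c : R) : `|altsign R z * c| = `|c|.
Proof. by rewrite normrM normr_sign mul1r. Qed.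

End AltSign.

Lemma deriv_prim (R : realFieldType) (q : {poly R}) : (prim q)^`() = q.
Proof.
apply/polyP => j; rewrite coef_deriv coef_poly ltnS.
case: ltnP => hj /=; first by rewrite -(mulr_natr (q`_j / _)) divfK // pnatr_eq0.
by rewrite nth_default ?mul0rn.
Qed.

Section Mesh.
Variables (R : realFieldType) (xh : int -> R).
Hypothesis xh_incr : forall i : int, xh i < xh (i + 1).

Lemma mesh_lt (a b : int) : a < b -> xh a < xh b.
Proof.
move=> ab; have -> : b = a + (absz (b - a - 1)%R).+1 by lia.
elim: (absz _) => [|n IH]; first exact: xh_incr.
apply: lt_trans IH _; have -> : a + n.+2 = a + n.+1 + 1 by lia.
exact: xh_incr.
Qed.

Lemma mesh_gap_gt0 (a b : int) : a < b -> 0 < xh b - xh a.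
Proof. by rewrite subr_gt0; exact: mesh_lt. Qed.

Fixpoint divdiff (f : int -> R) (n : nat) (a : int) : R :=
  if n is n'.+1 then (divdiff f n' (a + 1) - divdiff f n' a) / (xh (a + n) - xh a)
  else f a.

Fixpoint neville (f : int -> R) (n : nat) (a : int) : {poly R} :=
  if n is n'.+1 then
    (xh (a + n) - xh a)^-1 *:
      (('X - (xh a)%:P) * neville f n' (a + 1) - ('X - (xh (a + n))%:P) * neville f n' a)
  else (f a)%:P.

Fixpoint nodal (a : int) (n : nat) : {poly R} :=
  if n is n'.+1 then nodal a n' * ('X - (xh (a + n'))%:P) else 1.

Lemma divdiff_succ f (n : nat) (a : int) : divdiff f n.+1 a =
  (divdiff f n (a + 1) - divdiff f n a) / (xh (a + n.+1) - xh a).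
Proof. by []. Qed.

Lemma size_neville f n a : (size (neville f n a) <= n.+1)%N.
Proof.
elim: n a => [|n IH] a /=; first exact: size_polyC_leq1.
apply/leq_sizeP => [[//|j]] hj.
have h1 := leq_sizeP _ _ (IH (a + 1)); have h0 := leq_sizeP _ _ (IH a).
by rewrite coefZ coefB !coefXsubCM (h1 j hj) (h0 j hj) (h1 _ (ltnW hj)) (h0 _ (ltnW hj))
  !mulr0 !subrr mulr0.
Qed.

Lemma coef_neville f n a : (neville f n a)`_n = divdiff f n a.
Proof.
elim: n a => [|n IH] a /=; first by rewrite coefC.
have h1 := leq_sizeP _ _ (size_neville f n (a + 1)).
have h0 := leq_sizeP _ _ (size_neville f n a).
by rewrite coefZ coefB !coefXsubCM !IH h1 ?h0 // !mulr0 !subr0 mulrC.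
Qed.

Lemma neville_node f (n : nat) (a j : int) : a <= j <= a + n -> (neville f n a).[xh j] = f j.
Proof.
elim: n a j => [|n IH] a j hj /=.
  have -> : j = a by lia.
  by rewrite hornerC.
have hgap : xh (a + n.+1) - xh a != 0 by rewrite lt0r_neq0 ?mesh_gap_gt0 //; lia.
rewrite hornerZ hornerD hornerN !hornerM !hornerXsubC.
have [-> | ja] := eqVneq j a.
  by rewrite subrr mul0r sub0r (IH a a); [field | lia].
have [-> | jb] := eqVneq j (a + n.+1).
  by rewrite subrr mul0r subr0 (IH (a + 1)); [field | lia].
rewrite (IH (a + 1)); last lia.
rewrite (IH a); last lia.
by field.
Qed.

Lemma size_nodal a n : (size (nodal a n) <= n.+1)%N.
Proof.
elim: n => [|n IH] /=; first by rewrite size_poly1.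
have h := leq_sizeP _ _ IH.
apply/leq_sizeP => [[//|j]] hj.
by rewrite mulrC coefXsubCM (h j hj) (h _ (ltnW hj)) mulr0 subrr.
Qed.

Lemma coef_nodal a n : (nodal a n)`_n = 1.
Proof.
elim: n => [|n IH] /=; first by rewrite coefC.
have h := leq_sizeP _ _ (size_nodal a n).
by rewrite mulrC coefXsubCM IH h // mulr0 subr0.
Qed.

Lemma nodal_node (a : int) (n : nat) (j : int) : a <= j < a + n -> (nodal a n).[xh j] = 0.
Proof.
elim: n => [|n IH] hj /=; first lia.
rewrite hornerM hornerXsubC.
have [-> | ne] := eqVneq j (a + n); first by rewrite subrr mulr0.
by rewrite IH ?mul0r //; lia.
Qed.

Lemma nodal_gt0 (a : int) (n : nat) (i : int) : a + n <= i -> 0 < (nodal a n).[xh i].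
Proof.
elim: n => [|n IH] hi /=; first by rewrite hornerC.
by rewrite hornerM hornerXsubC mulr_gt0 ?IH ?mesh_gap_gt0 //; lia.
Qed.

Lemma deriv_nodal_sign (a : int) (n : nat) (i : int) : a <= i < a + n ->
  0 < altsign R (a + n - 1 - i) * (nodal a n)^`().[xh i].
Proof.
elim: n => [|n IH] hi; first lia.
rewrite /= derivM derivXsubC mulr1 hornerD hornerM hornerXsubC.
have [e | ne] := eqVneq (a + n) i.
  rewrite -e subrr mulr0 add0r (_ : _ - 1 - _ = 0); last lia.
  by rewrite altsign0 mul1r nodal_gt0 //; lia.
rewrite nodal_node ?addr0; last lia.
rewrite (_ : _ - 1 - i = (a + n - 1 - i) + 1); last lia.
rewrite altsignS.
have := IH ltac:(lia); have := mesh_gap_gt0 i (a + n) ltac:(lia).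
nra.
Qed.

Lemma mesh_inj : injective xh.
Proof.
move=> a b e; case: (ltgtP a b) => // hab; have := mesh_lt _ _ hab; by rewrite e ltxx.
Qed.

Lemma poly_nodes_eq0 (n : nat) (a : int) (q : {poly R}) : (size q <= n)%N ->
  (forall j, a <= j < a + n -> q.[xh j] = 0) -> q = 0.
Proof.
move=> hsize hq; apply/eqP; apply: contraTT hsize => /max_poly_roots hroots.
rewrite -ltnNge; have := hroots [seq xh (a + j%:Z) | j <- iota 0 n].
rewrite size_map size_iota; apply.
  apply/allP => y /mapP[j]; rewrite mem_iota => hj ->.
  by apply/eqP/hq; lia.
rewrite map_inj_uniq ?iota_uniq // => j l /mesh_inj; lia.
Qed.

Lemma poly_nodes_factor (n : nat) (a : int) (q : {poly R}) : (size q <= n.+1)%N ->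
  (forall j, a <= j < a + n -> q.[xh j] = 0) -> q = q`_n *: nodal a n.
Proof.
move=> hsize hq; apply/eqP; rewrite -subr_eq0; apply/eqP.
apply: (@poly_nodes_eq0 n a).
  have hq0 := leq_sizeP _ _ hsize; have hnod := leq_sizeP _ _ (size_nodal a n).
  apply/leq_sizeP => j hj; rewrite coefB coefZ.
  have [-> | ne] := eqVneq j n; first by rewrite coef_nodal mulr1 subrr.
  have hnj : (n < j)%N by lia.
  by rewrite (hq0 j) // (hnod j) // mulr0 subrr.
by move=> j hj; rewrite hornerD hornerN hornerZ hq // nodal_node // mulr0 subrr.
Qed.

Lemma neville_shift_sub f n x : neville f n x - neville f n (x - 1) =
  (divdiff f n x - divdiff f n (x - 1)) *: nodal x n.
Proof.
rewrite [LHS](@poly_nodes_factor n x) ?coefB ?coef_neville //.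
  by rewrite size_polyB_le ?size_neville.
by move=> j hj; rewrite hornerD hornerN !neville_node ?subrr //; lia.
Qed.

Section ENO.
Variable v : int -> R.

Lemma cell_len_gt0 j : 0 < cell_len xh j.
Proof. by rewrite mesh_gap_gt0 //; lia. Qed.

Lemma dd_succ (n : nat) (a : int) : dd xh v n.+1 a =
  (dd xh v n (a + 1) - dd xh v n a) / (xh (a + n.+1) - xh (a - 1)).
Proof. by []. Qed.

Lemma eno_stS (i : int) (m : nat) : eno_st xh v i m.+1 =
  if `|dd xh v m.+1 (eno_st xh v i m - 1)| < `|dd xh v m.+1 (eno_st xh v i m)|
  then eno_st xh v i m - 1 else eno_st xh v i m.
Proof. by []. Qed.

Lemma eno_st_bounds (i : int) (m : nat) : i - m%:Z <= eno_st xh v i m <= i.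
Proof.
elim: m => [|m IH]; first by rewrite /=; lia.
by rewrite eno_stS; case: ifP => _; lia.
Qed.

Lemma eno_st_le_succ (i : int) (m : nat) : eno_st xh v i m <= eno_st xh v (i + 1) m.
Proof.
elim: m => [|m IH]; first by rewrite /=; lia.
rewrite !eno_stS.
have [-> | ne] := eqVneq (eno_st xh v i m) (eno_st xh v (i + 1) m); first by [].
by case: ifP => _; case: ifP => _; lia.
Qed.

Lemma altsign_dd_succ (i : int) (m : nat) (x : int) :
  altsign R (x + m.+1 - i) * dd xh v m.+2 x =
  (altsign R (x + 1 + m - i) * dd xh v m.+1 (x + 1) + altsign R (x + m - i) * dd xh v m.+1 x)
  / (xh (x + m.+2) - xh (x - 1)).
Proof.
rewrite dd_succ.
rewrite (_ : x + m.+1 - i = (x + m - i) + 1); last lia.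
rewrite (_ : x + 1 + m - i = (x + m - i) + 1); last lia.
have hgap : xh (x + m.+2) - xh (x - 1) != 0 by rewrite lt0r_neq0 ?mesh_gap_gt0 //; lia.
by rewrite altsignS; field.
Qed.

(* The ENO invariant: for every stencil x, ..., x + m + 1 lying between the
   stencils chosen at i and at i + 1, the divided difference on it, weighted by
   the sign of the nodal derivative at xh i (see deriv_nodal_sign), has the
   sign of [v_i, v_(i+1)]. *)
Lemma eno_signed_dd_ge0 {s : R} {i : int} : 0 <= s * dd xh v 1 i ->
  forall (m : nat) (x : int), eno_st xh v i m <= x < eno_st xh v (i + 1) m ->
  0 <= s * (altsign R (x + m - i) * dd xh v m.+1 x).
Proof.
move=> h0; elim=> [|m IH] x.
  move=> /= hx; have -> : x = i by lia.
  by rewrite (_ : i + 0%:Z - i = 0) ?altsign0 ?mul1r //; lia.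
move: IH (eno_st_bounds i m) (eno_st_bounds (i + 1) m) (eno_st_le_succ i m).
rewrite !eno_stS; set A := eno_st xh v i m; set B := eno_st xh v (i + 1) m.
move=> IH hA hB hAB hx.
have hgap : 0 < xh (x + m.+2) - xh (x - 1) by rewrite mesh_gap_gt0 //; lia.
rewrite altsign_dd_succ mulrA; apply: divr_ge0; last exact: ltW.
have [eAB | nAB] := eqVneq A B.
  by move: hx; rewrite eAB; case: ifP => _; lia.
have [xA | Ax] := ltP x A.
  move: hx; case: ifP => [smallA hx | _]; last lia.
  have -> : x = A - 1 by lia.
  rewrite (_ : A - 1 + 1 = A); last lia.
  apply: mulr_ge0_addr_dominated; first by apply: IH; lia.
  by rewrite !normr_altsignM ltW.
have [xB | Bx] := ltP (x + 1) B.
  by rewrite mulrDr; apply: addr_ge0; apply: IH; lia.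
move: hx => /andP[_]; case: ifP => [_ | largeB] hxB; first lia.
have -> : x = B - 1 by lia.
rewrite [X in s * X]addrC (_ : B - 1 + 1 = B); last lia.
apply: mulr_ge0_addr_dominated; first by apply: IH; lia.
by rewrite !normr_altsignM leNgt largeB.
Qed.

Section Primitive.
Variable V : int -> R.
Hypothesis V_antidiff : forall j, V j - V (j - 1) = v j * cell_len xh j.

Lemma dd_divdiff (n : nat) (a : int) : dd xh v n a = divdiff V n.+1 (a - 1).
Proof.
elim: n a => [|n IH] a.
  rewrite divdiff_succ /= (_ : a - 1 + 1 = a); last lia.
  by rewrite V_antidiff mulfK // lt0r_neq0 // cell_len_gt0.
rewrite dd_succ divdiff_succ !IH (_ : a + 1 - 1 = a - 1 + 1); last lia.
by rewrite (_ : a - 1 + n.+2 = a + n.+1); last lia.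
Qed.

Lemma divdiff_shift_sub (n : nat) (x : int) :
  divdiff V n.+1 x - divdiff V n.+1 (x - 1) = (xh (x + n.+1) - xh (x - 1)) * dd xh v n.+1 x.
Proof.
rewrite dd_divdiff (divdiff_succ V n.+1) (_ : x - 1 + 1 = x); last lia.
rewrite (_ : x - 1 + n.+2 = x + n.+1); last lia.
by rewrite mulrC divfK // lt0r_neq0 // mesh_gap_gt0 //; lia.
Qed.

Lemma cell_avg_prim (q : {poly R}) (j : int) : cell_avg xh q j = v j ->
  (prim q).[xh j] - (prim q).[xh (j - 1)] = V j - V (j - 1).
Proof.
rewrite V_antidiff /cell_avg /pint => <-.
by rewrite divfK // lt0r_neq0 // cell_len_gt0.
Qed.

Lemma reconstruction_neville (m : nat) (q : {poly R}) (s : int) : (size q <= m.+1)%N ->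
  (forall j, s <= j <= s + m.+1 - 1 -> cell_avg xh q j = v j) ->
  q = (neville V m.+1 (s - 1))^`().
Proof.
move=> hsize havg; set P := prim q; set c := P.[xh (s - 1)] - V (s - 1).
have hP (r : nat) : (r <= m.+1)%N -> P.[xh (s - 1 + r)] = V (s - 1 + r) + c.
  elim: r => [|r IH] hr; first by rewrite addr0 /c subrKC.
  have := cell_avg_prim _ _ (havg (s - 1 + r.+1) ltac:(lia)).
  rewrite (_ : s - 1 + r.+1 - 1 = s - 1 + r) ?IH; [lra | lia | lia].
have hPc : P - c%:P = neville V m.+1 (s - 1).
  apply/eqP; rewrite -subr_eq0; apply/eqP; apply: (@poly_nodes_eq0 m.+2 (s - 1)).
    have hsP : (size P <= m.+2)%N by rewrite (leq_trans (size_poly _ _)).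
    by rewrite !size_polyB_le ?size_neville // (leq_trans (size_polyC_leq1 _)).
  move=> j hj; have -> : j = s - 1 + absz (j - (s - 1))%R by lia.
  by rewrite !hornerD !hornerN hornerC hP ?neville_node ?addrK ?subrr //; lia.
by rewrite -(deriv_prim _ q) -/P -(subrK c%:P P) hPc derivD derivC addr0.
Qed.

Lemma eno_stencil_step_ge0 (s : R) (i : int) (m : nat) (x : int) :
  0 <= s * dd xh v 1 i -> eno_st xh v i m <= x < eno_st xh v (i + 1) m ->
  0 <= s * ((neville V m.+1 x)^`().[xh i] - (neville V m.+1 (x - 1))^`().[xh i]).
Proof.
move=> h0 hx; have hA := eno_st_bounds i m; have hB := eno_st_bounds (i + 1) m.
rewrite -hornerN -hornerD -derivB neville_shift_sub derivZ hornerZ divdiff_shift_sub.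
have hgap : 0 < xh (x + m.+1) - xh (x - 1) by rewrite mesh_gap_gt0 //; lia.
have hnodal := deriv_nodal_sign x m.+1 i ltac:(lia).
rewrite (_ : x + m.+1 - 1 - i = x + m - i) in hnodal; last lia.
have hdd := eno_signed_dd_ge0 h0 m x hx.
set sg := altsign R (x + m - i) in hnodal hdd.
set D := (nodal x m.+1)^`().[xh i] in hnodal *; set d := dd xh v m.+1 x in hdd *.
set h := xh (x + m.+1) - xh (x - 1) in hgap *.
have -> : s * (h * d * D) = h * (sg * D) * (s * (sg * d)).
  by rewrite -[LHS]mul1r -(altsign_sqr R (x + m - i)) -/sg; ring.
by apply: mulr_ge0 => //; apply: mulr_ge0; exact: ltW.
Qed.

End Primitive.

Lemma eno_jump_ge0 (m : nat) (p : int -> {poly R})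
    (hp : forall i, eno_poly_spec m.+1 xh v i (p i)) (s : R) (i : int) :
  0 <= s * dd xh v 1 i -> 0 <= s * ((p (i + 1)).[xh i] - (p i).[xh i]).
Proof.
move=> h0; have [V V_antidiff] := exists_antidifference _ (fun j => v j * cell_len xh j).
have [hsize1 havg1] := hp (i + 1); have [hsize0 havg0] := hp i.
rewrite (@reconstruction_neville V V_antidiff m _ _ hsize1 havg1).
rewrite (@reconstruction_neville V V_antidiff m _ _ hsize0 havg0) mulrBr.
set f := fun x => s * (neville V m.+1 (x - 1))^`().[xh i].
apply: (telescope_ge0 _ f); first exact: eno_st_le_succ.
move=> x hx; rewrite /f -mulrBr; apply: eno_stencil_step_ge0 => //.
by move: hx; rewrite /eno_stencil /=; lia.
Qed.

End ENO.
End Mesh.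

Theorem mainTheorem1 (R : realFieldType) (k : nat) (hk : (1 <= k)%N)
    (xh : int -> R) (hmesh : is_mesh xh) (v : int -> R)
    (p : int -> {poly R})
    (hp : forall i : int, eno_poly_spec k xh v i (p i)) :
  forall i : int,
    let vminus := (p i).[xh i] in
    let vplus := (p (i + 1)).[xh i] in
    (0 < v (i + 1) - v i -> 0 <= vplus - vminus) /\
    (v (i + 1) - v i < 0 -> vplus - vminus <= 0) /\
    (v (i + 1) - v i = 0 -> vplus - vminus = 0).
Proof.
move=> i vminus vplus; rewrite {}/vminus {}/vplus.
case: k hk hp => [//|m] _ hp.
have hgap : 0 < xh (i + 1) - xh (i - 1) by rewrite (mesh_gap_gt0 _ _ hmesh.1) //; lia.
have dd1 : dd xh v 1 i = (v (i + 1) - v i) / (xh (i + 1) - xh (i - 1)) by [].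
have jump_ge0 := @eno_jump_ge0 R xh hmesh.1 v m p hp.
have up := jump_ge0 1 i; have down := jump_ge0 (-1) i.
rewrite !mul1r in up; rewrite !mulN1r !oppr_ge0 in down.
split; [|split] => hv.
- by apply: up; rewrite dd1 divr_ge0 ?ltW.
- by apply: down; rewrite dd1 mulr_le0_ge0 ?invr_ge0 ?ltW.
- by apply/le_anti; rewrite down ?up // dd1 hv mul0r.
Qed.
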